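(* Let $k\ge 1$ and let $n_1,\ldots,n_k\ge 3$ be (not necessarily distinct) integers. Then the direct product $C_{n_1}\times\cdots\times C_{n_k}$ is $\mathbb{Z}_{n_1\cdots n_k}$-distance antimagic if and only if all of $n_1,\ldots,n_k$ are odd. In particular, for every $d\ge 1$ and odd $n\ge 3$, the direct product of $d$ copies of $C_n$ is $\mathbb{Z}_{n^d}$-distance antimagic.
   Context: $C_n$ is the cycle of length $n$. The direct product $G_1\times\cdots\times G_k$ has vertex set $V(G_1)\times\cdots\times V(G_k)$, with $(x_1,\ldots,x_k)$ and $(y_1,\ldots,y_k)$ adjacent iff $x_iy_i\in E(G_i)$ for every $i$. For a graph $G$ with $n$ vertices, a $\mathbb{Z}_n$-distance antimagic labelling is a bijection $f:V(G)\to\mathbb{Z}_n$ such that the weights $w_f(x)=\sum_{y\in N(x)} f(y)$ (mod $n$, $N(x)$ the open neighbourhood) are pairwise distinct; $G$ is $\mathbb{Z}_n$-distance antimagic if such a labelling exists. *)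

From mathcomp Require Import all_boot.
Set Implicit Arguments. Unset Strict Implicit. Unset Printing Implicit Defensive.

Definition cycle_adj (n : nat) (x y : 'I_n) : bool :=
  (y == (x.+1 %% n) :> nat) || (x == (y.+1 %% n) :> nat).

Definition prod_vertex (k : nat) (n : 'I_k -> nat) : finType :=
  {dffun forall i : 'I_k, 'I_(n i)}.

Definition prod_adj (k : nat) (n : 'I_k -> nat) (x y : prod_vertex n) : bool :=
  [forall i : 'I_k, cycle_adj (x i) (y i)].

(* Z_m-distance antimagic: a bijection f : V -> Z_m (here Z_m represented by 'I_m,
   with arithmetic mod m) whose weights w(x) = sum_{y in N(x)} f(y) mod m are
   pairwise distinct. *)
Definition Zdist_antimagic (V : finType) (adj : V -> V -> bool) (m : nat) : Prop :=
  exists f : V -> 'I_m, bijective f /\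
    injective (fun x : V => (\sum_(y : V | adj x y) (f y : nat)) %% m).

Definition prod_cycles_Zantimagic (k : nat) (n : 'I_k -> nat) : Prop :=
  Zdist_antimagic (@prod_adj k n) (\prod_(i < k) n i).

From mathcomp Require Import all_boot.
From mathcomp Require Import zify.
Set Implicit Arguments. Unset Strict Implicit. Unset Printing Implicit Defensive.

(* In C_{n_1} x ... x C_{n_k} (all n_i >= 3) the neighbours of x are exactly the
   2^k vertices obtained by moving every coordinate one step forward or back,
   indexed injectively by sign vectors e : 'I_k -> bool.
   - Sufficiency (all n_i odd): label x by its mixed-radix value
     f(x) = sum_i x_i * n_0 ... n_{i-1} mod m, a bijection onto Z_m.  Summing over
     the sign vectors, twice the weight of x is 2^k times the mixed-radix value
     of the digits (x_i + 1) + (x_i - 1) = 2 x_i mod n_i.  As 2 is invertible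
     modulo every odd n_i and modulo m, distinct vertices get distinct weights.
   - Necessity (some n_i even, so m = 2a): the graph is 2^k-regular, so the
     weights add up to 2^k times the labels.  Both the labels and (by
     injectivity) the weights run through all of Z_m, so C(m,2) = 2^k C(m,2)
     mod m; but C(2a,2) = a and 2 C(2a,2) = 0 mod 2a, a contradiction. *)

Lemma cycle_adjE N (t u : 'I_N) : cycle_adj t u = (u == ordS t) || (u == ord_pred t).
Proof.
have succ_eq : (t == ordS u) = (u == ord_pred t).
  by apply/eqP/eqP => [->|->]; rewrite ?ordSK ?ord_predK.
by rewrite /cycle_adj -succ_eq.
Qed.

(* For N >= 3 these two neighbours are distinct: otherwise t + 2 = t mod N. *)
Lemma ordS_neq_pred N (t : 'I_N) : 2 < N -> ordS t != ord_pred t.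
Proof.
move=> N3; have tN := ltn_ord t; apply/negP => /eqP /(congr1 (@ordS N)).
rewrite ord_predK => /(congr1 val) /=.
rewrite -addn1 modnDml addn1.
case: (ltngtP t.+2 N) => [lt|gt|eq]; first by rewrite modn_small //; lia.
- have -> : t.+2 = 1 + N by lia.
  rewrite modnDr modn_small; lia.
- by rewrite {1}eq modnn; lia.
Qed.

Lemma ordS_add_pred N (t : 'I_N) : ordS t + ord_pred t = 2 * t %[mod N].
Proof.
have tN := ltn_ord t; rewrite /= modnDm.
have -> : t.+1 + (t + N).-1 = 2 * t + N by lia.
by rewrite modnDr.
Qed.

Lemma dvdn_prod_sub k (P Q : pred 'I_k) (F : 'I_k -> nat) :
  subpred P Q -> \prod_(i | P i) F i %| \prod_(i | Q i) F i.
Proof.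
move=> PQ; rewrite [X in _ %| X](bigID P) /= (eq_bigl P) ?dvdn_mulr // => i.
by case Pi: (P i); rewrite ?andbT ?andbF ?PQ.
Qed.

(* Mixed-radix numerals: the digit x_i of x : prod_vertex n has place value
   n_0 * ... * n_{i-1}; the digit values may be recoded by functions g i. *)
Section MixedRadix.
Variables (k : nat) (n : 'I_k -> nat).
Hypothesis n_gt0 : forall i, 0 < n i.

Definition place (j : nat) : nat := \prod_(l < k | l < j) n l.

Definition radix (g : forall i, 'I_(n i) -> nat) (x : prod_vertex n) : nat :=
  \sum_(i < k) place i * g i (x i).

Lemma place_gt0 j : 0 < place j.
Proof. exact: prodn_gt0. Qed.

Lemma place_succ (i : 'I_k) : place i * n i = place i.+1.
Proof.
rewrite /place [RHS](bigD1 i) //= mulnC; congr (_ * _); apply: eq_bigl => l.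
by rewrite -val_eqE ltnS; case: ltngtP.
Qed.

Lemma place_dvd i j : i <= j -> place i %| place j.
Proof. by move=> ij; apply: dvdn_prod_sub => l /= /leq_trans; apply. Qed.

Lemma place_dvd_prod j : place j %| \prod_(i < k) n i.
Proof. exact: dvdn_prod_sub. Qed.

Lemma sum_split_at (i : 'I_k) (F : 'I_k -> nat) :
  \sum_l F l = \sum_(l : 'I_k | l < i) F l + F i + \sum_(l : 'I_k | i < l) F l.
Proof.
rewrite (bigID (fun l : 'I_k => l < i)) /= [X in _ + X = _](bigD1 i) ?ltnn //=.
by rewrite addnA; congr (_ + _); apply: eq_bigl => l; rewrite -val_eqE /=; case: ltngtP.
Qed.

(* If each digit recoding g i is injective modulo n_i, the numeral is
   injective modulo the product of the radices: reducing modulo the place value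
   of digit j+1 determines digits 0..j, by induction on j. *)
Lemma radix_inj (g : forall i, 'I_(n i) -> nat) (x x' : prod_vertex n) :
  (forall i (t t' : 'I_(n i)), g i t = g i t' %[mod n i] -> t = t') ->
  radix g x = radix g x' %[mod \prod_(i < k) n i] -> x = x'.
Proof.
move=> g_inj same.
suff prefix j : forall i : 'I_k, i < j -> x i = x' i.
  by apply/ffunP => i; apply: (prefix k i (ltn_ord i)).
elim: j => [//|j IH] i; rewrite ltnS leq_eqVlt => /orP [/eqP ij|]; last exact: IH.
have tail_vanish (y : prod_vertex n) :
    (\sum_(l : 'I_k | i < l) place l * g l (y l)) %% place i.+1 = 0.
  by apply/eqP/dvdn_sum => l il; apply/dvdn_mulr/place_dvd.
move: same => /(congr1 (modn^~ (place i.+1))); rewrite !modn_dvdm ?place_dvd_prod //.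
rewrite /radix !(sum_split_at i) -modnDmr tail_vanish -[in RHS]modnDmr tail_vanish !addn0.
rewrite (eq_bigr (fun l : 'I_k => place l * g l (x' l))); last by move=> l li; rewrite IH // -ij.
move/eqP; rewrite eqn_modDl -place_succ -!muln_modr eqn_pmul2l ?place_gt0 // => /eqP.
exact: g_inj.
Qed.

End MixedRadix.

(* Over all sign vectors, coordinate i takes each value in exactly half the
   cases (flipping coordinate i is an involution exchanging them). *)
Lemma sum_signs_coord k (i : 'I_k) (h : bool -> nat) :
  2 * \sum_(e : {ffun 'I_k -> bool}) h (e i) = 2 ^ k * (h true + h false).
Proof.
pose flip (e : {ffun 'I_k -> bool}) := [ffun l => if l == i then ~~ e l else e l].
have flipK : involutive flip.
  by move=> e; apply/ffunP => l; rewrite !ffunE; case: eqP; rewrite ?negbK.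
rewrite mul2n -addnn {2}(reindex_inj (inv_inj flipK)) -big_split /=.
rewrite (eq_bigr (fun _ => h true + h false)); last first.
  by move=> e _; rewrite ffunE eqxx; case: (e i); rewrite // addnC.
by rewrite sum_nat_const cardT -cardE card_ffun card_bool card_ord.
Qed.

Lemma coprime_mul_cancel c a b d : coprime c d -> c * a = c * b %[mod d] -> a = b %[mod d].
Proof.
wlog ab : a b / a <= b.
  move=> W cop; case: (leqP a b) => [ab|/ltnW ba]; first exact: W.
  by move/esym/(W _ _ ba cop)/esym.
move=> cop /esym/eqP; rewrite eqn_mod_dvd ?leq_mul2l ?ab ?orbT // -mulnBr Gauss_dvdr.
  by move=> dvd; apply/esym/eqP; rewrite eqn_mod_dvd.
by rewrite coprime_sym.
Qed.

Lemma sum_bij_ord (T : finType) m (g : T -> 'I_m) : bijective g -> \sum_x val (g x) = 'C(m, 2).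
Proof. by move=> g_bij; rewrite -bin2_sum big_mkord (reindex g) //; exact: onW_bij. Qed.

(* For even m = 2a we have C(m,2) = a but 2^e C(m,2) = 0 modulo m (e > 0). *)
Lemma bin2_even_mod a e : 0 < a -> 0 < e -> 'C(a * 2, 2) != 2 ^ e * 'C(a * 2, 2) %[mod a * 2].
Proof.
move=> a_gt0 e_gt0.
have bin2E : 'C(a * 2, 2) = a + (a - 1) * (a * 2).
  rewrite bin2 -(doubleK (a + _)); congr half; rewrite -!muln2; nia.
have twiceE : 2 * 'C(a * 2, 2) = (a * 2 - 1) * (a * 2) by rewrite bin2E; nia.
rewrite {1}bin2E addnC modnMDl modn_small; last lia.
rewrite -(prednK e_gt0) expnS -mulnA mulnCA twiceE mulnA modnMl.
by rewrite -lt0n.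
Qed.

Section DirectProduct.
Variables (k : nat) (n : 'I_k -> nat).
Hypothesis n_ge3 : forall i, 3 <= n i.

Notation V := (prod_vertex n).
Notation signs := {ffun 'I_k -> bool}.

Definition nbr (x : V) (e : signs) : V :=
  finfun (fun i => if e i then ordS (x i) else ord_pred (x i)).

Lemma nbrE x e i : nbr x e i = if e i then ordS (x i) else ord_pred (x i).
Proof. by rewrite ffunE. Qed.

Lemma nbrK (e : signs) : cancel (nbr^~ e) (nbr^~ [ffun i => ~~ e i]).
Proof.
move=> x; apply/ffunP => i; rewrite !nbrE ffunE.
by case: (e i); rewrite /= ?ordSK ?ord_predK.
Qed.

(* Distinct directions give distinct neighbours (this needs n_i >= 3). *)
Lemma nbr_inj x : injective (nbr x).
Proof.
move=> e1 e2 /ffunP same; apply/ffunP => i; move: (same i); rewrite !nbrE.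
have := ordS_neq_pred (x i) (n_ge3 i).
by case: (e1 i); case: (e2 i) => // /negP + E; rewrite E ?eqxx.
Qed.

Lemma prod_adj_nbr x y : prod_adj x y = [exists e, y == nbr x e].
Proof.
apply/forallP/existsP => [adj|[e /eqP ->] i].
- exists [ffun i => y i == ordS (x i)]; apply/eqP/ffunP => i.
  rewrite nbrE ffunE; case: eqP => // not_succ.
  by move: (adj i); rewrite cycle_adjE => /orP [/eqP|/eqP].
- by rewrite nbrE cycle_adjE; case: (e i); rewrite eqxx ?orbT.
Qed.

Lemma sum_nbrs x (G : V -> nat) :
  \sum_(y | prod_adj x y) G y = \sum_(e : signs) G (nbr x e).
Proof.
rewrite (eq_bigl [in [set nbr x e | e in [set: signs]]]).
  rewrite big_imset /=; last by move=> ? ? _ _; apply: nbr_inj.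
  by apply: eq_bigl => e; rewrite inE.
move=> y; rewrite prod_adj_nbr.
by apply/existsP/imsetP => [[e /eqP ->]|[e _ ->]]; exists e.
Qed.

Lemma card_prod_vertex : #|V| = \prod_(i < k) n i.
Proof. by rewrite card_dep_ffun foldrE big_image /=; apply: eq_bigr => i _; rewrite card_ord. Qed.

(* Handshake count for the 2^k-regular product graph: every vertex lies in
   2^k neighbourhoods, so the weights sum to 2^k times the labels. *)
Lemma sum_weights (f : V -> nat) :
  \sum_x \sum_(y | prod_adj x y) f y = 2 ^ k * \sum_y f y.
Proof.
rewrite (eq_bigr (fun x => \sum_(e : signs) f (nbr x e))); last by move=> x _; rewrite sum_nbrs.
rewrite exchange_big /= (eq_bigr (fun _ => \sum_y f y)); last first.
  by move=> e _; rewrite [RHS](reindex_inj (can_inj (nbrK e))).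
by rewrite sum_nat_const cardT -cardE card_ffun card_bool card_ord.
Qed.

Lemma twice_weight_radix x :
  2 * \sum_(e : signs) radix (fun i (t : 'I_(n i)) => val t) (nbr x e) =
  2 ^ k * radix (fun i (t : 'I_(n i)) => ordS t + ord_pred t) x.
Proof.
rewrite /radix exchange_big !big_distrr /=; apply: eq_bigr => i _.
pose h b : nat := if b then ordS (x i) else ord_pred (x i).
rewrite -big_distrr /= mulnCA (eq_bigr (fun e : signs => h (e i))); last by move=> e _; rewrite nbrE.
by rewrite (sum_signs_coord i h) mulnCA.
Qed.

Lemma odd_prod_cycles_antimagic : (forall i, odd (n i)) -> prod_cycles_Zantimagic n.
Proof.
move=> n_odd.
have n_gt0 i : 0 < n i by apply: leq_trans (n_ge3 i).
set m := \prod_(i < k) n i.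
have m_gt0 : 0 < m by apply: prodn_gt0.
have two_m : coprime 2 m.
  by rewrite coprime2n /m; elim/big_ind: _ => //= a b; rewrite oddM => -> ->.
pose f x : 'I_m := Ordinal (ltn_pmod (radix (fun i (t : 'I_(n i)) => val t) x) m_gt0).
have f_inj : injective f.
  move=> x x' /(congr1 val) /= same; apply: (radix_inj n_gt0) same => i t t'.
  by rewrite !modn_small // => /val_inj.
exists f; split; first by apply: (inj_card_bij f_inj); rewrite card_prod_vertex card_ord.
move=> x x' /=; rewrite !sum_nbrs !modn_summ => /(congr1 (fun r => 2 * r %% m)) /=.
rewrite !modnMmr !twice_weight_radix => /coprime_mul_cancel same.
apply: (radix_inj n_gt0) (same _) => [i t t'|]; last by rewrite coprimeXl.
rewrite !ordS_add_pred => /coprime_mul_cancel; rewrite coprime2n n_odd => /(_ isT).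
by rewrite !modn_small // => /val_inj.
Qed.

Lemma antimagic_prod_cycles_odd : 0 < k -> prod_cycles_Zantimagic n -> forall i, odd (n i).
Proof.
move=> k_gt0 [f [f_bij w_inj]] i; apply/negPn/negP => n_even.
set m := \prod_(i < k) n i in f f_bij w_inj.
have m_gt0 : 0 < m by apply: prodn_gt0 => l; apply: leq_trans (n_ge3 l).
have /dvdnP [a m_eq] : 2 %| m.
  by apply: (@dvdn_trans (n i)); rewrite ?dvdn2 // /m (bigD1 i) //= dvdn_mulr.
have a_gt0 : 0 < a by move: m_gt0; rewrite m_eq muln_gt0 => /andP [].
pose W x : 'I_m := Ordinal (ltn_pmod (\sum_(y | prod_adj x y) f y) m_gt0).
have W_bij : bijective W.
  apply: inj_card_bij; last by rewrite card_prod_vertex card_ord.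
  by move=> x x' /(congr1 val) /= /w_inj.
have : 'C(m, 2) = 2 ^ k * 'C(m, 2) %[mod m].
  by rewrite -{1}(sum_bij_ord W_bij) -(sum_bij_ord f_bij) /= modn_summ sum_weights.
by apply/eqP; rewrite m_eq bin2_even_mod.
Qed.

End DirectProduct.

Unset Implicit Arguments.

Theorem mainTheorem15 (k : nat) (n : 'I_k -> nat) :
  1 <= k -> (forall i, 3 <= n i) ->
  (prod_cycles_Zantimagic n <-> (forall i, odd (n i))) /\
  (forall (d m : nat), 1 <= d -> 3 <= m -> odd m ->
     prod_cycles_Zantimagic (fun _ : 'I_d => m)).
Proof.
move=> k_gt0 n_ge3; split.
  by split; [exact: antimagic_prod_cycles_odd | exact: odd_prod_cycles_antimagic].
by move=> d m _ m_ge3 m_odd; apply: odd_prod_cycles_antimagic.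
Qed.
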